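(* Let $\mathcal{F}$ and $\mathcal{G}$ be uniform sheaves over $\mathcal{B}$, let $\mathcal{F}'\subset\mathcal{F}$ be a dense subsheaf, and suppose $\mathcal{G}$ is complete. Then every uniformly continuous morphism $f:\mathcal{F}'\to\mathcal{G}$ extends uniquely to a uniformly continuous morphism $\tilde f:\mathcal{F}\to\mathcal{G}$.
   Context: $\mathcal{W}$ is a quasi-separated (fs log) adic space locally of finite type over a finite extension $K$ of $\mathbb{Q}_p$, and $\mathcal{B}$ is a basis of the big pro-Kummer-étale site $(Rig/\mathcal{W})_{proket}$ consisting of log affinoid perfectoid objects. A Hausdorff topological sheaf on $\mathcal{B}$ is a functor $\mathcal{B}^{op}\to$ (Hausdorff topological spaces) such that $\mathcal{F}(U\sqcup V)=\mathcal{F}(U)\times\mathcal{F}(V)$ and for every truncated finite hypercover $\{V^2_j\}\to\{V^1_i\}\to V$ in $\mathcal{B}$ the diagram $\mathcal{F}(V)\to\prod_i\mathcal{F}(V^1_i)\rightrightarrows\prod_j\mathcal{F}(V^2_j)$ is an equalizer of topological spaces. It is a uniform sheaf if all $\mathcal{F}(V)$ are uniform spaces, complete if all $\mathcal{F}(V)$ are complete; a morphism is uniformly continuous if each $f(V)$ is; a subsheaf $\mathcal{F}'\subset\mathcal{F}$ is dense if $\mathcal{F}'(V)$ is dense in $\mathcal{F}(V)$ for all $V\in\mathcal{B}$. *)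

From HB Require Import structures.
From mathcomp Require Import all_boot all_order all_algebra.
From mathcomp Require Import all_classical all_reals all_analysis.
Set Implicit Arguments. Unset Strict Implicit. Unset Printing Implicit Defensive.
Import Order.TTheory GRing.Theory Num.Theory.
Local Open Scope classical_set_scope.

(** An abstract site playing the role of the basis B: a category with
    chosen binary disjoint unions (coproducts) and a designated class of
    truncated finite hypercovers.  Morphisms are composed as [comp g f] = g o f. *)

(** Data of a truncated finite hypercover {V2_j} -> {V1_i} -> V :
    n1 objects V1 i with maps to V, n2 objects V2 j each mapping to
    two of the V1's (V2_j covers the fibre products V1_{s j} x_V V1_{t j}). *)
Record hc_data (ob : Type) (hom : ob -> ob -> Type) := HcData {
  hc_base : ob;
  hc_n1 : nat;
  hc_V1 : 'I_hc_n1 -> ob;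
  hc_a : forall i, hom (hc_V1 i) hc_base;
  hc_n2 : nat;
  hc_V2 : 'I_hc_n2 -> ob;
  hc_s : 'I_hc_n2 -> 'I_hc_n1;
  hc_t : 'I_hc_n2 -> 'I_hc_n1;
  hc_p1 : forall j, hom (hc_V2 j) (hc_V1 (hc_s j));
  hc_p2 : forall j, hom (hc_V2 j) (hc_V1 (hc_t j))
}.
Arguments hc_base {ob hom}.
Arguments hc_n1 {ob hom}.
Arguments hc_V1 {ob hom}.
Arguments hc_a {ob hom}.
Arguments hc_n2 {ob hom}.
Arguments hc_V2 {ob hom}.
Arguments hc_s {ob hom}.
Arguments hc_t {ob hom}.
Arguments hc_p1 {ob hom}.
Arguments hc_p2 {ob hom}.

Record site := Site {
  ob : Type;
  hom : ob -> ob -> Type;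
  idc : forall U, hom U U;
  comp : forall U V W, hom V W -> hom U V -> hom U W;
  comp_id_l : forall U V (f : hom U V), comp (idc V) f = f;
  comp_id_r : forall U V (f : hom U V), comp f (idc U) = f;
  comp_assoc : forall U V W X (h : hom W X) (g : hom V W) (f : hom U V),
      comp h (comp g f) = comp (comp h g) f;
  dunion : ob -> ob -> ob;
  inj_l : forall U V, hom U (dunion U V);
  inj_r : forall U V, hom V (dunion U V);
  is_hypercover : hc_data hom -> Prop
}.
Arguments hom : clear implicits.
Arguments idc : clear implicits.
Arguments comp : clear implicits.
Arguments dunion : clear implicits.
Arguments inj_l : clear implicits.
Arguments inj_r : clear implicits.
Arguments comp s {U V W}.
Arguments is_hypercover : clear implicits.

Record upresheaf (B : site) := UPresheaf {
  sec : ob B -> uniformType;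
  res : forall U V, hom B U V -> sec V -> sec U;
  res_id : forall U (x : sec U), res (idc B U) x = x;
  res_comp : forall U V W (g : hom B V W) (f : hom B U V) (x : sec W),
      res (comp B g f) x = res f (res g x);
  res_cont : forall U V (f : hom B U V), continuous (res f)
}.
Arguments sec {B}.
Arguments res {B} u {U V}.

(** Sheaf conditions (as an equalizer / product of topological spaces) for a
    sub-presheaf [S] of [F], where [S V] carries the subspace topology of
    [F V].  Taking [S := fun _ => setT] gives the sheaf conditions for [F]
    itself.  "Homeomorphism onto the product / equalizer" is stated as:
    bijectivity onto it, plus the topology of [S V] being the initial topology
    for the (finitely many) restriction maps. *)
Definition is_subsheaf (B : site) (F : upresheaf B) (S : forall V, set (sec F V)) :=
  (forall U V (f : hom B U V) x, S V x -> S U (res F f x)) /\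
  (* F(U ⊔ V) = F(U) × F(V) as topological spaces *)
  (forall U V,
     (forall a b, S U a -> S V b ->
        exists x, [/\ S (dunion B U V) x, res F (inj_l B U V) x = a
                   & res F (inj_r B U V) x = b]) /\
     (forall x y, S (dunion B U V) x -> S (dunion B U V) y ->
        res F (inj_l B U V) x = res F (inj_l B U V) y ->
        res F (inj_r B U V) x = res F (inj_r B U V) y -> x = y) /\
     (forall x (N : set (sec F (dunion B U V))), S _ x -> nbhs x N ->
        exists N1 N2, [/\ nbhs (res F (inj_l B U V) x) N1,
                          nbhs (res F (inj_r B U V) x) N2 &
          forall y, S _ y -> N1 (res F (inj_l B U V) y) ->
                    N2 (res F (inj_r B U V) y) -> N y])) /\
  (* equalizer condition for every truncated finite hypercover *)
  (forall h : hc_data (hom B), is_hypercover B h ->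
     (forall s : forall i, sec F (hc_V1 h i),
        (forall i, S _ (s i)) ->
        (forall j, res F (hc_p1 h j) (s (hc_s h j)) = res F (hc_p2 h j) (s (hc_t h j))) ->
        exists x, S (hc_base h) x /\ forall i, res F (hc_a h i) x = s i) /\
     (forall x y, S (hc_base h) x -> S (hc_base h) y ->
        (forall i, res F (hc_a h i) x = res F (hc_a h i) y) -> x = y) /\
     (forall x (N : set (sec F (hc_base h))), S _ x -> nbhs x N ->
        exists Ns : forall i, set (sec F (hc_V1 h i)),
          (forall i, nbhs (res F (hc_a h i) x) (Ns i)) /\
          forall y, S _ y -> (forall i, Ns i (res F (hc_a h i) y)) -> N y)).

Definition is_usheaf (B : site) (F : upresheaf B) :=
  (forall V, hausdorff_space (sec F V)) /\ is_subsheaf (fun V : ob B => [set: sec F V]).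

Definition complete_space (T : uniformType) :=
  forall Fl : set_system T, ProperFilter Fl -> cauchy Fl -> exists x : T, Fl --> x.

Definition is_complete_usheaf (B : site) (F : upresheaf B) :=
  forall V, complete_space (sec F V).

Definition dense_subsheaf (B : site) (F : upresheaf B) (S : forall V, set (sec F V)) :=
  is_subsheaf S /\ forall V, dense (S V).

Definition unif_continuous_on (T T' : uniformType) (A : set T) (f : T -> T') :=
  forall E, entourage E -> exists2 D, entourage D &
    forall x y, A x -> A y -> D (x, y) -> E (f x, f y).

(** A uniformly continuous morphism from the subsheaf [S] of [F] to [G]
    (components are given as total functions, only their values on [S V]
    matter). *)
Definition unif_morph_on (B : site) (F G : upresheaf B)
    (S : forall V, set (sec F V)) (f : forall V, sec F V -> sec G V) :=
  (forall U V (g : hom B U V) x, S V x -> f U (res F g x) = res G g (f V x)) /\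
  (forall V, unif_continuous_on (S V) (f V)).

Definition unif_morph (B : site) (F G : upresheaf B)
    (f : forall V, sec F V -> sec G V) :=
  (forall U V (g : hom B U V) x, f U (res F g x) = res G g (f V x)) /\
  (forall V, unif_continuous (f V)).

From HB Require Import structures.
From mathcomp Require Import all_boot all_order all_algebra.
From mathcomp Require Import all_classical all_reals all_analysis.
Local Open Scope classical_set_scope.

(** Each component of the extension is the classical extension of a
    uniformly continuous map from a dense subset into a complete Hausdorff
    space: at [x], take the limit of [f] along the trace on [S V] of the
    neighbourhood filter of [x], which is Cauchy by uniform continuity.
    Two continuous maps into a Hausdorff space agreeing on a dense subset
    are equal; this gives at once uniqueness and, since restriction maps
    are continuous and [f] commutes with them on [S], the compatibility of
    the extension with restrictions. *)

Lemma unif_continuous_continuous {U V : uniformType} {g : U -> V} :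
  unif_continuous g -> continuous g.
Proof.
move=> gu x; apply/cvg_entourageP => E entE.
by apply: filterS (nbhs_entourage x (gu _ entE)) => y /xsectionP.
Qed.

Lemma entourage_split3 {M : uniformType} {E : set (M * M)} : entourage E ->
  exists2 E', entourage E' &
    forall a b c d, E' (a, b) -> E' (b, c) -> E' (c, d) -> E (a, d).
Proof.
move=> entE; have entE1 := entourage_split_ent entE.
exists (split_ent (split_ent E)); first exact: entourage_split_ent.
move=> a b c d Eab Ebc Ecd; apply: (entourage_split c entE).
  exact: (entourage_split b entE1).
exact: split_ent_subset.
Qed.

Lemma dense_within_nbhs_proper {T : topologicalType} {A : set T} (x : T) :
  dense A -> ProperFilter (within A (nbhs x)).
Proof.
move=> dA; apply: within_nbhs_proper => B xB.
have [|y [By Ay]] := dA _ _ (@open_interior _ B); first by exists x.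
by exists y; split=> //; exact: interior_subset.
Qed.

Lemma dense_continuous_eq {T T' : topologicalType} {A : set T} {g h : T -> T'} :
  hausdorff_space T' -> dense A -> continuous g -> continuous h ->
  (forall x, A x -> g x = h x) -> forall x, g x = h x.
Proof.
move=> T'_sep dA gc hc ghA x; have := dense_within_nbhs_proper x dA => Ax_proper.
apply: (cvg_unique T'_sep (F := g @ within A (nbhs x))).
  exact: cvg_trans (cvg_app g (cvg_within A)) (gc x).
apply: cvg_trans (near_eq_cvg _) (cvg_trans (cvg_app h (cvg_within A)) (hc x)).
by apply: filterS (withinT A (nbhs_filter x)) => y /ghA.
Qed.

Section UniformExtension.
Context {T T' : uniformType} (A : set T) (f : T -> T').
Hypotheses (T'_sep : hausdorff_space T') (T'_complete : complete_space T').
Hypotheses (A_dense : dense A) (f_uc : unif_continuous_on A f).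

Lemma cauchy_within (x : T) : cauchy (f @ within A (nbhs x)).
Proof.
move=> E; rewrite nbhs_filterE => entE; have [D entD fD] := f_uc _ entE.
pose D' := split_ent D; have entD' : entourage D' := entourage_split_ent entD.
exists ([set f y | y in [set y | A y /\ D' (y, x)]],
        [set f y | y in [set y | A y /\ D' (x, y)]]).
  split=> /=.
  - apply: filterS (nbhs_entourage x (entourage_inv entD')) => y /xsectionP Dyx Ay.
    by exists y.
  - apply: filterS (nbhs_entourage x entD') => y /xsectionP Dxy Ay.
    by exists y.
move=> [_ _] [/= [y1 [Ay1 Dy1] <-] [y2 [Ay2 Dy2] <-]].
exact/fD/(entourage_split x entD).
Qed.

Lemma cvg_within_ex (x : T) : exists y : T', f @ within A (nbhs x) --> y.
Proof.
have := dense_within_nbhs_proper x A_dense => Ax_proper.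
exact: T'_complete (cauchy_within x).
Qed.

Definition uc_ext (x : T) : T' := projT1 (cid (cvg_within_ex x)).

Lemma uc_ext_cvg (x : T) : f @ within A (nbhs x) --> uc_ext x.
Proof. exact: (projT2 (cid (cvg_within_ex x))). Qed.

Lemma uc_extE (x : T) : A x -> uc_ext x = f x.
Proof.
move=> Ax; have := dense_within_nbhs_proper x A_dense => Ax_proper.
apply: (cvg_unique T'_sep (F := f @ within A (nbhs x))); first exact: uc_ext_cvg.
apply/cvg_entourageP => E entE; have [D entD fD] := f_uc _ entE.
by apply: filterS (nbhs_entourage x entD) => y /xsectionP Dxy Ay; exact: fD.
Qed.

Lemma uc_ext_unif_continuous : unif_continuous uc_ext.
Proof.
move=> E entE; have [E' entE' E'3] := entourage_split3 entE.
have [D entD fD] := f_uc _ entE'; have [D' entD' D'3] := entourage_split3 entD.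
apply: filterS (entD') => -[x y] /= D'xy.
have := dense_within_nbhs_proper x A_dense => Ax_proper.
have := dense_within_nbhs_proper y A_dense => Ay_proper.
have /filter_ex[x' [Ax' D'x'x E'x']] : \forall x' \near within A (nbhs x),
    [/\ A x', D' (x', x) & E' (uc_ext x, f x')].
  near=> x'; split.
  - by near: x'; exact: withinT.
  - near: x'; apply: cvg_within.
    by apply: filterS (nbhs_entourage x (entourage_inv entD')) => ? /xsectionP.
  - by near: x'; exact: (cvg_entourage (uc_ext_cvg x) entE').
have /filter_ex[y' [Ay' D'yy' E'y']] : \forall y' \near within A (nbhs y),
    [/\ A y', D' (y, y') & E' (f y', uc_ext y)].
  near=> y'; split.
  - by near: y'; exact: withinT.
  - near: y'; apply: cvg_within.
    by apply: filterS (nbhs_entourage y entD') => ? /xsectionP.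
  - by near: y'; exact: (cvg_entourage (uc_ext_cvg y) (entourage_inv entE')).
exact: E'3 E'x' (fD _ _ Ax' Ay' (D'3 _ _ _ _ D'x'x D'xy D'yy')) E'y'.
Unshelve. all: by end_near.
Qed.

End UniformExtension.

Theorem lemma2p28 (B : site) (F G : upresheaf B)
  (S : forall V, set (sec F V)) (f : forall V, sec F V -> sec G V) :
  is_usheaf F -> is_usheaf G -> is_complete_usheaf G ->
  dense_subsheaf S -> unif_morph_on S f ->
  exists ft : forall V, sec F V -> sec G V,
    [/\ unif_morph ft, (forall V x, S V x -> ft V x = f V x) &
      forall g : forall V, sec F V -> sec G V,
        unif_morph g -> (forall V x, S V x -> g V x = f V x) ->
        forall V x, g V x = ft V x].
Proof.
move=> _ [G_sep _] G_complete [[S_res _] S_dense] [f_res f_uc].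
pose ft V := uc_ext (S V) (f V) (G_complete V) (S_dense V) (f_uc V).
have ft_uc V : unif_continuous (ft V) by exact: uc_ext_unif_continuous.
have ft_cont V : continuous (ft V) by exact/unif_continuous_continuous.
have ftE V x : S V x -> ft V x = f V x by exact: uc_extE.
exists ft; split=> //.
- split=> // U V r.
  apply: (dense_continuous_eq (G_sep U) (S_dense V)).
  + by move=> x; apply: continuous_comp; [exact: res_cont | exact: ft_cont].
  + by move=> x; apply: continuous_comp; [exact: ft_cont | exact: res_cont].
  + move=> x Sx /=; rewrite ftE; last exact: S_res.
    by rewrite (f_res _ _ _ _ Sx) ftE.
- move=> g [_ g_uc] gE V; apply: (dense_continuous_eq (G_sep V) (S_dense V)).
  + exact: unif_continuous_continuous.
  + exact: ft_cont.
  + by move=> x Sx; rewrite gE // ftE.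
Qed.
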